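(* Let $\pi$ be a positive differentiable probability density on $\mathbb{R}$ such that $(\log\pi)'$ is bounded in some neighbourhood of $0$, and for $\lambda>0$ let $\pi^{(\lambda)}(x)=\lambda^{-1}\pi(x/\lambda)$. Fix $\sigma>0$ and $x\in\mathbb{R}$. Let $Q^R(x,\cdot)=N(x,\sigma^2)$, let $Q^M_\lambda(x,\cdot)=N\big(x+\frac{\sigma^2}{2}(\log\pi^{(\lambda)})'(x),\sigma^2\big)$, and let $Q^B_\lambda(x,dy)=\frac{2\mu_\sigma(y-x)}{1+e^{-(\log\pi^{(\lambda)})'(x)(y-x)}}dy$ where $\mu_\sigma$ is the $N(0,\sigma^2)$ density. Then both $\|Q^M_\lambda(x,\cdot)-Q^R(x,\cdot)\|_{TV}$ and $\|Q^B_\lambda(x,\cdot)-Q^R(x,\cdot)\|_{TV}$ are at most $\Theta(1/\lambda)$ as $\lambda\uparrow\infty$, i.e. $\limsup_{\lambda\to\infty}\lambda\,\|Q^{M/B}_\lambda(x,\cdot)-Q^R(x,\cdot)\|_{TV}<\infty$.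
   Context: $\|\mu-\nu\|_{TV}=\sup_{A}|\mu(A)-\nu(A)|$. *)

From HB Require Import structures.
From mathcomp Require Import all_boot all_order all_algebra.
From mathcomp Require Import all_classical all_reals all_analysis.
Set Implicit Arguments. Unset Strict Implicit. Unset Printing Implicit Defensive.
Import Order.TTheory GRing.Theory Num.Def Num.Theory.
Import numFieldNormedType.Exports.
Local Open Scope classical_set_scope.
Local Open Scope ring_scope.

Definition pos_diff_density {R : realType} (p : R -> R) : Prop :=
  (forall x, 0 < p x) /\ (forall x, derivable p x 1) /\
  (\int[lebesgue_measure]_x (p x)%:E = 1)%E.

Definition logder {R : realType} (f : R -> R) (x : R) : R :=
  derive1 (fun y => ln (f y)) x.

Definition scaled_density {R : realType} (p : R -> R) (lam : R) (x : R) : R :=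
  lam^-1 * p (x / lam).

(* Q^R(x, .) = N(x, sigma^2)  (normal_prob takes the standard deviation) *)
Definition QR {R : realType} (sigma x : R) : set R -> \bar R :=
  normal_prob x sigma.

Definition QM {R : realType} (p : R -> R) (sigma lam x : R) : set R -> \bar R :=
  normal_prob (x + sigma ^+ 2 / 2 * logder (scaled_density p lam) x) sigma.

Definition QB {R : realType} (p : R -> R) (sigma lam x : R) : set R -> \bar R :=
  fun A => (\int[lebesgue_measure]_(y in A)
     (2 * normal_pdf 0 sigma (y - x) /
        (1 + expR (- (logder (scaled_density p lam) x) * (y - x))))%:E)%E.

Definition tv_dist {R : realType} (mu nu : set R -> \bar R) : \bar R :=
  ereal_sup [set (`|mu A - nu A|)%E | A in [set A : set R | measurable A]].

From HB Require Import structures.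
From mathcomp Require Import all_boot all_order all_algebra.
From mathcomp Require Import all_classical all_reals all_analysis.
From mathcomp Require Import measurable_realfun ring lra.
Import Order.TTheory GRing.Theory Num.Def Num.Theory.
Import numFieldNormedType.Exports.
Local Open Scope classical_set_scope.
Local Open Scope ring_scope.

(* Everything is governed by L := (log pi^(lam))'(x) = lam^-1 (log pi)'(x / lam),
   which is O(1/lam) because x / lam eventually lies in the neighbourhood of 0
   where (log pi)' is bounded; so it suffices to bound both distances linearly
   in L.  For a density f, a pointwise bound |f - phi_s| <= c phi_(2s) gives
   TV <= c, since phi_(2s) has mass one.  Writing
   phi_s(t) = 2 exp(-3t^2/(8s^2)) phi_(2s)(t), the Gaussian factor absorbs the
   polynomial growth in t of the relative perturbations: exp(u) - 1 with
   |u| <= |d| (2|t| + 1) / (2s^2) for the mean shift d = s^2 L / 2 of Q^M, and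
   (1 - exp(-L t)) / (1 + exp(-L t)), of modulus at most |L t|, for Q^B. *)

Definition barker_pdf {R : realType} (s a m y : R) : R :=
  2 * normal_pdf 0 s (y - m) / (1 + expR (- a * (y - m))).

Definition density_measure {R : realType} (f : R -> R) : set R -> \bar R :=
  fun A => (\int[lebesgue_measure]_(y in A) (f y)%:E)%E.

Section exp_bounds.
Context {R : realType}.
Implicit Types u : R.

Lemma norm_expR_sub1_le u : `|expR u - 1| <= `|u| * expR `|u|.
Proof.
have eN : expR (- u) * expR u = 1 by rewrite -expRD addNr expR0.
have [u_ge0|u_lt0] := leP 0 u.
- have e_ge1 : 1 <= expR u by rewrite -expR0 ler_expR.
  rewrite (ger0_norm u_ge0) ger0_norm ?subr_ge0 //.
  have := ler_wpM2r (ltW (expR_gt0 u)) (expR_ge1Dx (- u)); rewrite eN; nra.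
- have e_le1 : expR u <= 1 by rewrite expR_le1 ltW.
  have eN_ge1 : 1 <= expR (- u) by rewrite -expR0 ler_expR oppr_ge0 ltW.
  rewrite (ltr0_norm u_lt0) ler0_norm ?subr_le0 //.
  have := expR_ge1Dx u; nra.
Qed.

Lemma norm_expR_ratio_le u : `|(1 - expR u) / (1 + expR u)| <= `|u|.
Proof.
have eN : expR (- u) * expR u = 1 by rewrite -expRD addNr expR0.
have den_gt0 : 0 < 1 + expR u by rewrite addr_gt0 ?expR_gt0.
rewrite normrM normfV (gtr0_norm den_gt0) ler_pdivrMr //.
have [u_ge0|u_lt0] := leP 0 u.
- have e_ge1 : 1 <= expR u by rewrite -expR0 ler_expR.
  rewrite (ger0_norm u_ge0) ler0_norm ?subr_le0 //.
  have := ler_wpM2r (ltW (expR_gt0 u)) (expR_ge1Dx (- u)); rewrite eN; nra.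
- have e_le1 : expR u <= 1 by rewrite expR_le1 ltW.
  rewrite (ltr0_norm u_lt0) ger0_norm ?subr_ge0 //.
  have := expR_ge1Dx u; have := expR_gt0 u; nra.
Qed.

End exp_bounds.

Lemma abse_sub_le {R : realType} (X Y : \bar R) (c : R) : Y \is a fin_num ->
  (X <= Y + c%:E)%E -> (Y <= X + c%:E)%E -> (`|X - Y| <= c%:E)%E.
Proof.
case: Y => // y _; case: X => [x| |] //=.
by rewrite -!EFinD !lee_fin => ? ?; rewrite ler_norml; apply/andP; split; lra.
Qed.

Section tv_dist_density.
Context {R : realType}.
Local Notation mu := (@lebesgue_measure R).
Variables (f g h : R -> R) (c : R).
Hypothesis c_ge0 : 0 <= c.
Hypotheses (f_ge0 : forall y, 0 <= f y) (g_ge0 : forall y, 0 <= g y)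
  (h_ge0 : forall y, 0 <= h y).
Hypotheses (mf : measurable_fun setT f) (mg : measurable_fun setT g)
  (mh : measurable_fun setT h).
Hypotheses (g_le1 : (\int[mu]_y (g y)%:E <= 1)%E)
  (h_le1 : (\int[mu]_y (h y)%:E <= 1)%E).
Hypothesis fg_le : forall y, `|f y - g y| <= c * h y.

Let integral_le1 {k : R -> R} {A} : measurable A -> (forall y, 0 <= k y) ->
  measurable_fun setT k -> (\int[mu]_y (k y)%:E <= 1)%E ->
  (\int[mu]_(y in A) (k y)%:E <= 1)%E.
Proof.
move=> mA k_ge0 mk; apply: le_trans; apply: ge0_subset_integral => //.
- exact/measurable_EFinP.
- by move=> y _; rewrite lee_fin.
Qed.

Let integral_le_add (k l : R -> R) A : measurable A ->
  (forall y, 0 <= k y) -> (forall y, 0 <= l y) ->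
  measurable_fun setT k -> measurable_fun setT l ->
  (forall y, k y <= l y + c * h y) ->
  (\int[mu]_(y in A) (k y)%:E <= \int[mu]_(y in A) (l y)%:E + c%:E)%E.
Proof.
move=> mA k_ge0 l_ge0 mk ml kl.
have ch_ge0 y : 0 <= c * h y by rewrite mulr_ge0.
have k_le : (\int[mu]_(y in A) (k y)%:E <=
    \int[mu]_(y in A) (l y + c * h y)%:E)%E.
  apply: ge0_le_integral => //; first by move=> y _; rewrite lee_fin.
  - exact/measurable_EFinP/measurable_funTS.
  - apply/measurable_EFinP/measurable_funTS.
    by apply: measurable_funD => //; exact: measurable_funM.
  - by move=> y _; rewrite lee_fin.
apply: le_trans k_le _.
under eq_integral do rewrite EFinD.
rewrite ge0_integralD //; first last.
- by apply/measurable_EFinP/measurable_funTS; exact: measurable_funM.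
- by move=> y _; rewrite lee_fin.
- exact/measurable_EFinP/measurable_funTS.
- by move=> y _; rewrite lee_fin.
rewrite leeD2l //.
under eq_integral do rewrite EFinM.
rewrite ge0_integralZl //; first last.
- by move=> y _; rewrite lee_fin.
- exact/measurable_EFinP/measurable_funTS.
by rewrite -[leRHS]mule1 lee_wpmul2l ?lee_fin // integral_le1.
Qed.

Lemma tv_dist_density_le :
  (tv_dist (density_measure f) (density_measure g) <= c%:E)%E.
Proof.
apply: ge_ereal_sup => _ [A mA <-].
apply: abse_sub_le.
- rewrite /density_measure ge0_fin_numE; last first.
    by apply: integral_ge0 => y _; rewrite lee_fin.
  by apply: le_lt_trans (integral_le1 mA g_ge0 mg g_le1) _; exact: ltey.
- by apply: integral_le_add => // y; have := fg_le y; rewrite ler_norml; lra.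
- by apply: integral_le_add => // y; have := fg_le y; rewrite ler_norml; lra.
Qed.

End tv_dist_density.

Section normal_perturbation.
Context {R : realType} (s : R).
Hypothesis s_gt0 : 0 < s.

Let normal_pdf_expR (r m y : R) : 0 < r ->
  normal_pdf m r y = normal_peak r * expR (- (y - m) ^+ 2 / (r ^+ 2 *+ 2)).
Proof. by move=> r_gt0; rewrite /normal_pdf gt_eqF. Qed.

Lemma normal_peak_double : normal_peak (2 * s) = normal_peak s / 2.
Proof.
rewrite /normal_peak.
have -> : (2 * s) ^+ 2 * pi *+ 2 = 2 ^+ 2 * (s ^+ 2 * pi *+ 2).
  by rewrite !mulrnAr; ring.
by rewrite sqrtrM ?sqr_ge0 // sqrtr_sqr ger0_norm // invfM mulrC.
Qed.

Lemma normal_pdf_double m y : normal_pdf m s y =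
  2 * expR (- (3 * (y - m) ^+ 2 / (8 * s ^+ 2))) * normal_pdf m (2 * s) y.
Proof.
rewrite !normal_pdf_expR ?mulr_gt0 // normal_peak_double.
rewrite (_ : forall a b : R, 2 * a * (_ / 2 * b) = normal_peak s * (a * b)).
  by rewrite -expRD; congr (_ * expR _); field; rewrite gt_eqF.
by move=> a b; field.
Qed.

Lemma normal_pdf_shift m d y : normal_pdf (m + d) s y =
  expR ((2 * (y - m) * d - d ^+ 2) / (2 * s ^+ 2)) * normal_pdf m s y.
Proof.
rewrite !normal_pdf_expR // mulrCA -expRD.
by congr (_ * expR _); field; rewrite gt_eqF.
Qed.

Lemma norm_mul_expR_quad_le t : `|t| * expR (- (3 * t ^+ 2 / (8 * s ^+ 2))) <= s.
Proof.
set A := 3 * t ^+ 2 / (8 * s ^+ 2).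
have t_le : `|t| <= s * (1 + A).
  have s2_gt0 : 0 < s ^+ 2 by rewrite exprn_gt0.
  rewrite /A -(ler_pM2l (x := 8 * s)) ?mulr_gt0 //.
  have -> : 8 * s * (s * (1 + 3 * t ^+ 2 / (8 * s ^+ 2))) =
      8 * s ^+ 2 + 3 * `|t| ^+ 2.
    by rewrite real_normK ?num_real //; field; rewrite gt_eqF.
  have := sqr_ge0 (3 * `|t| - 4 * s); nra.
rewrite -(ler_pM2r (expR_gt0 A)) -mulrA -expRD addNr expR0 mulr1.
apply: le_trans t_le _; rewrite ler_pM2l //; exact: expR_ge1Dx.
Qed.

Lemma normal_pdf_shift_sub_le m d y : `|d| <= 1 ->
  `|normal_pdf (m + d) s y - normal_pdf m s y| <=
  2 * expR (4 / s ^+ 2) * `|d| * normal_pdf m (2 * s) y.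
Proof.
move=> d_le1.
rewrite normal_pdf_shift // -{2}[normal_pdf m s y]mul1r -mulrBl.
rewrite normal_pdf_double // normrM (ger0_norm (x := 2 * _ * _)); last first.
  by rewrite !mulr_ge0 ?expR_ge0 ?normal_pdf_ge0.
set t := y - m; set A := 3 * t ^+ 2 / (8 * s ^+ 2).
set u := (2 * t * d - d ^+ 2) / (2 * s ^+ 2).
set w := (2 * `|t| + 1) / (2 * s ^+ 2).
have s2_gt0 : 0 < s ^+ 2 by rewrite exprn_gt0.
have w_ge0 : 0 <= w by rewrite divr_ge0 ?addr_ge0 ?mulr_ge0 // ltW.
have u_le : `|u| <= `|d| * w.
  rewrite /w normrM (gtr0_norm (x := (2 * s ^+ 2)^-1)) ?invr_gt0 ?mulr_gt0 //.
  rewrite mulrA ler_pM2r ?invr_gt0 ?mulr_gt0 //.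
  apply: le_trans (ler_normB _ _) _.
  rewrite normrX !normrM normr_nat; have := normr_ge0 d; have := normr_ge0 t; nra.
have exp_u : `|expR u - 1| <= `|d| * expR (2 * w).
  apply: le_trans (norm_expR_sub1_le u) _.
  have u_le_w : `|u| <= w by apply: le_trans u_le _; rewrite ler_piMl.
  rewrite mulr_natl mulr2n expRD mulrA.
  apply: ler_pM; rewrite ?expR_ge0 ?ler_expR //.
  apply: le_trans u_le _; rewrite ler_wpM2l //.
  by apply: le_trans _ (expR_ge1Dx w); rewrite lerDr.
have exponent_le : 2 * w - A <= 4 / s ^+ 2.
  have -> : 2 * w - A = (16 * `|t| + 8 - 3 * `|t| ^+ 2) / (8 * s ^+ 2).
    by rewrite /w /A real_normK ?num_real //; field; rewrite gt_eqF.
  have -> : 4 / s ^+ 2 = 32 / (8 * s ^+ 2) by field; rewrite gt_eqF.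
  apply: ler_wpM2r; first by rewrite invr_ge0 mulr_ge0 // ltW.
  have := sqr_ge0 (3 * `|t| - 8); nra.
have key : `|expR u - 1| * expR (- A) <= `|d| * expR (4 / s ^+ 2).
  apply: le_trans (ler_wpM2r (expR_ge0 _) exp_u) _.
  by rewrite -mulrA -expRD ler_wpM2l // ler_expR.
have := ler_wpM2r (normal_pdf_ge0 m (2 * s) y) key; lra.
Qed.

Lemma barker_pdf_sub_le a m y :
  `|barker_pdf s a m y - normal_pdf m s y| <=
  2 * s * `|a| * normal_pdf m (2 * s) y.
Proof.
have centered : normal_pdf 0 s (y - m) = normal_pdf m s y.
  by rewrite /normal_pdf gt_eqF // /normal_fun subr0.
set E := expR (- a * (y - m)).
have den_gt0 : 0 < 1 + E by rewrite addr_gt0 ?expR_gt0.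
have -> : barker_pdf s a m y - normal_pdf m s y =
    normal_pdf m s y * ((1 - E) / (1 + E)).
  by rewrite /barker_pdf centered -/E; field; rewrite gt_eqF.
rewrite normal_pdf_double // normrM (ger0_norm (x := 2 * _ * _)); last first.
  by rewrite !mulr_ge0 ?expR_ge0 ?normal_pdf_ge0.
have ratio_le : `|(1 - E) / (1 + E)| <= `|a| * `|y - m|.
  by apply: le_trans (norm_expR_ratio_le _) _; rewrite normrM normrN.
have gauss_le : `|a| * `|y - m| * expR (- (3 * (y - m) ^+ 2 / (8 * s ^+ 2))) <=
    `|a| * s.
  by rewrite -mulrA ler_wpM2l // norm_mul_expR_quad_le.
have := le_trans (ler_wpM2r (expR_ge0 _) ratio_le) gauss_le.
move/(ler_wpM2r (normal_pdf_ge0 m (2 * s) y)); lra.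
Qed.

Lemma tv_dist_normal_shift_le m d : `|d| <= 1 ->
  (tv_dist (normal_prob (m + d) s) (normal_prob m s) <=
   (2 * expR (4 / s ^+ 2) * `|d|)%:E)%E.
Proof.
move=> d_le1.
apply: (tv_dist_density_le _ _ (normal_pdf m (2 * s))).
all: rewrite ?integral_normal_pdf //.
- exact: normal_pdf_ge0.
- exact: normal_pdf_ge0.
- exact: normal_pdf_ge0.
- exact: measurable_normal_pdf.
- exact: measurable_normal_pdf.
- exact: measurable_normal_pdf.
- by move=> y; exact: normal_pdf_shift_sub_le.
Qed.

Lemma continuous_barker_pdf a m : continuous (barker_pdf s a m).
Proof.
move=> y; rewrite /barker_pdf; apply: cvgM.
  apply: cvgM; first exact: cvg_cst.
  apply: (continuous_comp (f := fun y => y - m)); last first.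
    exact: continuous_normal_pdf (lt0r_neq0 s_gt0) _.
  by apply: cvgB; [exact: cvg_id | exact: cvg_cst].
apply: (continuous_comp (f := fun y => 1 + expR (- a * (y - m)))); last first.
  by apply: inv_continuous; rewrite gt_eqF // addr_gt0 ?expR_gt0.
apply: cvgD; first exact: cvg_cst.
apply: (continuous_comp (f := fun y => - a * (y - m))); last exact: continuous_expR.
apply: cvgM; first exact: cvg_cst.
by apply: cvgB; [exact: cvg_id | exact: cvg_cst].
Qed.

Lemma tv_dist_barker_le a m :
  (tv_dist (density_measure (barker_pdf s a m)) (normal_prob m s) <=
   (2 * s * `|a|)%:E)%E.
Proof.
apply: (tv_dist_density_le _ _ (normal_pdf m (2 * s))).
all: rewrite ?integral_normal_pdf //.
- by rewrite mulr_ge0 // mulr_ge0 // ltW.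
- by move=> y; rewrite divr_ge0 ?mulr_ge0 ?normal_pdf_ge0 ?addr_ge0 ?expR_ge0.
- exact: normal_pdf_ge0.
- exact: normal_pdf_ge0.
- apply: continuous_measurable_fun; exact: continuous_barker_pdf.
- exact: measurable_normal_pdf.
- exact: measurable_normal_pdf.
- by move=> y; exact: barker_pdf_sub_le.
Qed.

End normal_perturbation.

Section log_derivative.
Context {R : realType}.
Implicit Types (p : R -> R) (lam z : R).

Lemma logderE p z : 0 < p z -> derivable p z 1 ->
  logder p z = derive1 p z / p z.
Proof.
move=> pz_gt0 /derivableP dp.
have dlnp := is_derive1_comp (is_derive1_ln pz_gt0) dp.
rewrite /logder derive1E (_ : (fun y => ln (p y)) = @ln R \o p) //.
by rewrite (@derive_val _ _ _ _ _ _ _ dlnp) derive1E mulrC.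
Qed.

Lemma logder_scaled p lam z : 0 < lam -> 0 < p (z / lam) ->
  derivable p (z / lam) 1 ->
  logder (scaled_density p lam) z = lam^-1 * logder p (z / lam).
Proof.
move=> lam_gt0 p_gt0 /derivableP dp.
have dscale : is_derive z 1 (fun y : R => y / lam) lam^-1.
  by apply: is_derive_eq; rewrite scaler0 add0r -[RHS]mulr1.
have dcomp := @is_derive1_comp _ p (fun y => y / lam) z _ _ dp dscale.
have dscaled : is_derive z 1 (scaled_density p lam)
    (lam^-1 * ('D_1 p (z / lam) * lam^-1)).
  exact: (is_deriveZ (lam^-1) dcomp).
have scaled_gt0 : 0 < scaled_density p lam z by rewrite mulr_gt0 ?invr_gt0.
rewrite logderE // logderE // !derive1E (@derive_val _ _ _ _ _ _ _ dscaled).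
rewrite /scaled_density.
by field; rewrite !gt_eqF.
Qed.

Lemma near_pinfty_logder_scaled_le p x delta M :
  (forall y, 0 < p y) -> (forall y, derivable p y 1) -> 0 < delta ->
  (forall y, `|y| < delta -> `|logder p y| <= M) ->
  \forall lam \near +oo, lam * `|logder (scaled_density p lam) x| <= M.
Proof.
move=> p_gt0 p_der delta_gt0 logder_le.
near=> lam.
have lam_gt0 : 0 < lam by near: lam; exact: nbhs_pinfty_gt (num_real _).
rewrite logder_scaled // normrM gtr0_norm ?invr_gt0 // mulVKf ?gt_eqF //.
apply: logder_le; rewrite normrM (gtr0_norm (x := lam^-1)) ?invr_gt0 //.
rewrite ltr_pdivrMr // mulrC -ltr_pdivrMr //.
by near: lam; exact: nbhs_pinfty_gt (num_real _).
Unshelve. all: end_near.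
Qed.

End log_derivative.

Theorem proposition2p2 (R : realType) (p : R -> R)
  (hp : pos_diff_density p)
  (hbd : exists delta : R, 0 < delta /\ exists M : R,
           forall y : R, `|y| < delta -> `|logder p y| <= M)
  (sigma : R) (hsigma : 0 < sigma) (x : R) :
  (exists C : R, \forall lam \near +oo%R,
      (lam%:E * tv_dist (QM p sigma lam x) (QR sigma x) <= C%:E)%E) /\
  (exists C : R, \forall lam \near +oo%R,
      (lam%:E * tv_dist (QB p sigma lam x) (QR sigma x) <= C%:E)%E).
Proof.
case: hp => p_gt0 [p_der _]; case: hbd => delta [delta_gt0 [M logder_le]].
have lam_logder :=
  near_pinfty_logder_scaled_le _ x _ _ p_gt0 p_der delta_gt0 logder_le.
have halfsigma2_ge0 : 0 <= sigma ^+ 2 / 2 by rewrite divr_ge0 ?sqr_ge0.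
split.
- exists (2 * expR (4 / sigma ^+ 2) * (sigma ^+ 2 / 2 * M)).
  near=> lam.
  have lam_gt0 : 0 < lam by near: lam; exact: nbhs_pinfty_gt (num_real _).
  set d := sigma ^+ 2 / 2 * logder (scaled_density p lam) x.
  have lam_d : lam * `|d| <= sigma ^+ 2 / 2 * M.
    by rewrite normrM ger0_norm // mulrCA ler_wpM2l //; near: lam.
  have d_le1 : `|d| <= 1.
    rewrite -(ler_pM2l lam_gt0) mulr1; apply: le_trans lam_d _.
    by near: lam; exact: nbhs_pinfty_ge (num_real _).
  apply: le_trans (lee_wpmul2l _ (tv_dist_normal_shift_le _ hsigma x _ d_le1)) _.
    by rewrite lee_fin ltW.
  by rewrite -EFinM lee_fin mulrCA ler_wpM2l // mulr_ge0 ?expR_ge0.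
- exists (2 * sigma * M).
  near=> lam.
  have lam_gt0 : 0 < lam by near: lam; exact: nbhs_pinfty_gt (num_real _).
  have lam_L : lam * `|logder (scaled_density p lam) x| <= M by near: lam.
  set L := logder (scaled_density p lam) x in lam_L *.
  apply: le_trans (lee_wpmul2l _ (tv_dist_barker_le _ hsigma L x)) _.
    by rewrite lee_fin ltW.
  by rewrite -EFinM lee_fin mulrCA ler_wpM2l // mulr_ge0 // ltW.
Unshelve. all: end_near.
Qed.
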